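(* Let $\mathcal{P}=((v_1,\dots,v_p),(v'_0,\dots,v'_{p+1}))$ be a dangerous, non-separable caterpillar structure for an assignment $(x,y)$, and let $\ell=\min_{v\in\Gamma(\mathcal{P})}L(v)$. Let $I=\{i: 0\le i\le p+1,\ v'_i\ne\mathrm{nil},\ L(v'_i)>\ell\}$. Then $\sum_{i\in I}(1-y_{v'_i})<2$.
   Context: $G=(V,E)$ undirected unweighted, $\mathrm{dist}_G$ shortest-path distance, $L:V\to\mathbb{N}$. An assignment is $x:V\times V\to\mathbb{R}_{\ge0}$, $y:V\to\mathbb{R}_{\ge0}$. A $\delta$-caterpillar structure for $(x,y)$ is a sequence of distinct vertices $P=(v_1,\dots,v_p)$ with a sequence $P'=(v'_0,\dots,v'_{p+1})$ such that: (i) $y_{v_i}=1$ for $i=1..p$; (ii) $\mathrm{dist}_G(v_i,v_{i+1})\le\delta$; (iii) each $v'_i$ is $\mathrm{nil}$ or a vertex not in $\{v_1,\dots,v_p\}$; (iv) for $1\le i\le p$, if $v'_i\ne\mathrm{nil}$ then $L(v_i)\ge L(v'_i)$, $0<y_{v'_i}<1$, $\mathrm{dist}_G(v_i,v'_i)\le\delta$; (v) if $v'_0\ne\mathrm{nil}$ then $\mathrm{dist}_G(v'_0,v_1)\le\delta$, $0<y_{v'_0}<1$; (vi) if $v'_{p+1}\ne\mathrm{nil}$ then $\mathrm{dist}_G(v'_{p+1},v_p)\le\delta$, $0<y_{v'_{p+1}}<1$; (vii) non-nil entries of $P'$ pairwise distinct; (viii) $\sum_{v\in V(P')}y_v\in\mathbb{Z}$,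 $V(P')$ being the set of non-nil entries. $\Gamma(\mathcal{P})$ is the set of $v_i$ for which there exist $0\le i_0<i<i_1\le p+1$ with $v'_{i_0},v'_{i_1}\ne\mathrm{nil}$ and $L(v'_{i_0})>L(v_i)$, $L(v'_{i_1})>L(v_i)$; $\mathcal{P}$ is safe if $\Gamma(\mathcal{P})=\emptyset$, dangerous otherwise. A dangerous $\mathcal{P}$ is separable iff there is $1\le i\le p$ with $v_i\in\Gamma(\mathcal{P})$, $L(v_i)=\min_{v\in\Gamma(\mathcal{P})}L(v)$, and either (a) $S_1\ge\lceil S_2\rceil-S_2$ where $S_2=\sum_{i<j\le p+1,\ v'_j\ne\mathrm{nil}}y_{v'_j}$ and $S_1=\sum(1-y_{v'_j})$ over $i<j\le p+1$ with $v'_j\ne\mathrm{nil}$ and $L(v'_j)>L(v_i)$; or (b) the same with $j$ ranging over $0\le j<i$ instead. A caterpillar structure that is not separable is called non-separable (in particular every safe one is non-separable). *)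

(* Reals are modelled by an arbitrary archimedean real field R
   (e.g. the reals); the ceiling is Num.ceil, integrality is Num.int. *)
From HB Require Import structures.
From mathcomp Require Import all_boot all_order all_algebra.
Set Implicit Arguments. Unset Strict Implicit. Unset Printing Implicit Defensive.
Import Order.TTheory GRing.Theory Num.Theory.
Local Open Scope ring_scope.

Definition simple_graph (V : finType) (e : rel V) : Prop :=
  symmetric e /\ irreflexive e.

(* dist_G(u,v) <= d : there is a walk with at most d edges from u to v. *)
Definition dist_le (V : finType) (e : rel V) (d : nat) (u v : V) : Prop :=
  exists s : seq V, (size s <= d)%N /\ path e u s /\ last u s = v.

Definition assignment (V : finType) (R : archiRealFieldType)
  (x : V -> V -> R) (y : V -> R) : Prop :=
  (forall u v, 0 <= x u v) /\ (forall v, 0 <= y v).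

Definition atv' (V : finType) (R : archiRealFieldType)
  (v' : nat -> option V) (f : V -> R) (j : nat) : R :=
  match v' j with Some w => f w | None => 0 end.

(* delta-caterpillar structure: P = (v 1, ..., v p), P' = (v' 0, ..., v' (p+1)),
   with None standing for nil. *)
Definition caterpillar (V : finType) (e : rel V) (R : archiRealFieldType)
  (L : V -> nat) (y : V -> R) (delta : nat)
  (p : nat) (v : nat -> V) (v' : nat -> option V) : Prop :=
      (forall i j, (1 <= i <= p)%N -> (1 <= j <= p)%N -> v i = v j -> i = j) /\
      (forall i, (1 <= i <= p)%N -> y (v i) = 1) /\
      (forall i, (1 <= i)%N -> (i < p)%N -> dist_le e delta (v i) (v i.+1)) /\
      (forall i w, (i <= p.+1)%N -> v' i = Some w ->
         forall k, (1 <= k <= p)%N -> w <> v k) /\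
      (forall i w, (1 <= i <= p)%N -> v' i = Some w ->
         [/\ (L w <= L (v i))%N, 0 < y w, y w < 1 & dist_le e delta (v i) w]) /\
      (forall w, v' 0%N = Some w -> dist_le e delta w (v 1%N) /\ 0 < y w /\ y w < 1) /\
      (forall w, v' p.+1 = Some w -> dist_le e delta w (v p) /\ 0 < y w /\ y w < 1) /\
      (forall i j w, (i <= p.+1)%N -> (j <= p.+1)%N -> v' i = Some w -> v' j = Some w -> i = j) /\
      (\sum_(0 <= j < p.+2) atv' v' y j) \is a Num.int.

Definition in_Gamma (V : finType) (L : V -> nat)
  (p : nat) (v : nat -> V) (v' : nat -> option V) (i : nat) : Prop :=
  (1 <= i <= p)%N /\
  exists i0 i1 a b, (i0 < i)%N /\ (i < i1)%N /\ (i1 <= p.+1)%N /\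
      v' i0 = Some a /\ v' i1 = Some b /\
      (L (v i) < L a)%N /\ (L (v i) < L b)%N.

Definition dangerous (V : finType) (L : V -> nat)
  (p : nat) (v : nat -> V) (v' : nat -> option V) : Prop :=
  exists i, in_Gamma L p v v' i.

Definition S1 (V : finType) (R : archiRealFieldType) (L : V -> nat) (y : V -> R)
  (v' : nat -> option V) (l lo hi : nat) : R :=
  \sum_(lo <= j < hi) atv' v' (fun w => if (l < L w)%N then 1 - y w else 0) j.

Definition S2 (V : finType) (R : archiRealFieldType) (y : V -> R)
  (v' : nat -> option V) (lo hi : nat) : R :=
  \sum_(lo <= j < hi) atv' v' y j.

Definition separable (V : finType) (R : archiRealFieldType)
  (L : V -> nat) (y : V -> R)
  (p : nat) (v : nat -> V) (v' : nat -> option V) : Prop :=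
  dangerous L p v v' /\
  exists i, [/\ in_Gamma L p v v' i,
     (forall k, in_Gamma L p v v' k -> (L (v i) <= L (v k))%N) &
     (* (a): j ranges over i < j <= p+1 *)
     ((Num.ceil (S2 y v' i.+1 p.+2))%:~R - S2 y v' i.+1 p.+2
        <= S1 L y v' (L (v i)) i.+1 p.+2
      \/
     (* (b): j ranges over 0 <= j < i *)
      (Num.ceil (S2 y v' 0 i))%:~R - S2 y v' 0 i
        <= S1 L y v' (L (v i)) 0 i)].

Definition is_min_Gamma (V : finType) (L : V -> nat)
  (p : nat) (v : nat -> V) (v' : nat -> option V) (ell : nat) : Prop :=
  (exists i, in_Gamma L p v v' i /\ L (v i) = ell) /\
  (forall i, in_Gamma L p v v' i -> (ell <= L (v i))%N).

From HB Require Import structures.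
From mathcomp Require Import all_boot all_order all_algebra.
Set Implicit Arguments. Unset Strict Implicit. Unset Printing Implicit Defensive.
Import Order.TTheory GRing.Theory Num.Theory.
Local Open Scope ring_scope.

(* Choose an index i with v_i in Gamma(P) and L(v_i) = ell.
   Since P is not separable, neither condition (a) nor (b) holds at i, so
   each one-sided sum S1 (over j > i, resp. j < i) is strictly smaller than
   the rounding gap ceil(S2) - S2 of the corresponding S2, which is itself
   below 1.  The remaining index j = i contributes nothing: by property (iv)
   of caterpillars, L(v'_i) <= L(v_i) = ell.  Splitting the full sum at i
   therefore bounds it by 1 + 1 = 2 strictly. *)

Lemma ceil_gap_lt1 (R : archiRealFieldType) (s : R) : (Num.ceil s)%:~R - s < 1.
Proof. by rewrite ltrBlDr addrC -ltrBlDr -[1]/(1%:~R) -intrB ceilB1_lt. Qed.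

Lemma lt1_of_not_ceil_gap_le (R : archiRealFieldType) (s t : R) :
  ~ ((Num.ceil s)%:~R - s <= t) -> t < 1.
Proof.
move=> not_le; apply: lt_trans (ceil_gap_lt1 s).
by rewrite ltNge; apply/negP.
Qed.

Section S1Facts.
Variables (V : finType) (R : archiRealFieldType) (L : V -> nat) (y : V -> R).
Variables (v' : nat -> option V) (l : nat).

Lemma S1_cat (lo m hi : nat) : (lo <= m <= hi)%N ->
  S1 L y v' l lo hi = S1 L y v' l lo m + S1 L y v' l m hi.
Proof. by case/andP=> lo_m m_hi; rewrite /S1 -big_cat_nat. Qed.

Lemma S1_low_index (i : nat) :
  (forall w, v' i = Some w -> (L w <= l)%N) -> S1 L y v' l i i.+1 = 0.
Proof.
rewrite /S1 big_nat1 /atv'; case: (v' i) => [w|] // /(_ w erefl) le_wl.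
by rewrite ltnNge le_wl.
Qed.

End S1Facts.

Lemma not_separable_sides_lt1 (V : finType) (R : archiRealFieldType)
  (L : V -> nat) (y : V -> R) (p : nat) (v : nat -> V) (v' : nat -> option V)
  (i : nat) :
  dangerous L p v v' -> ~ separable L y p v v' ->
  in_Gamma L p v v' i ->
  (forall k, in_Gamma L p v v' k -> (L (v i) <= L (v k))%N) ->
  S1 L y v' (L (v i)) 0 i < 1 /\ S1 L y v' (L (v i)) i.+1 p.+2 < 1.
Proof.
move=> danger not_sep Gi min_i.
split.
- apply: (@lt1_of_not_ceil_gap_le _ (S2 y v' 0 i)) => cond_b.
  by apply: not_sep; split=> //; exists i; split=> //; right.
- apply: (@lt1_of_not_ceil_gap_le _ (S2 y v' i.+1 p.+2)) => cond_a.
  by apply: not_sep; split=> //; exists i; split=> //; left.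
Qed.

Theorem mainTheorem14 (V : finType) (e : rel V) (R : archiRealFieldType)
  (L : V -> nat) (x : V -> V -> R) (y : V -> R) (delta : nat)
  (p : nat) (v : nat -> V) (v' : nat -> option V) (ell : nat) :
  simple_graph e ->
  assignment x y ->
  caterpillar e L y delta p v v' ->
  dangerous L p v v' ->
  ~ separable L y p v v' ->
  is_min_Gamma L p v v' ell ->
  S1 L y v' ell 0 p.+2 < 2.
Proof.
move=> _ _ [_ [_ [_ [_ [levels _]]]]] danger not_sep [[i [Gi <-]] min_ell].
have /andP[_ i_le_p] := Gi.1.
have [left_lt1 right_lt1] := not_separable_sides_lt1 danger not_sep Gi min_ell.
have middle0 : S1 L y v' (L (v i)) i i.+1 = 0.
  by apply: S1_low_index => w /(levels i w Gi.1) [].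
have split_at_i : S1 L y v' (L (v i)) 0 p.+2 = S1 L y v' (L (v i)) 0 i
    + S1 L y v' (L (v i)) i i.+1 + S1 L y v' (L (v i)) i.+1 p.+2.
  by rewrite -!S1_cat //= ?leqnSn // ltnS leqW.
by rewrite split_at_i middle0 addr0 -[2]/(1 + 1) ltrD.
Qed.
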